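(* Let $\Bbbk$ be an algebraically closed field of characteristic $p>2$, and let $\Psi_\Bbbk:Y_2^>(\Bbbk)\to W^{(2)}(\Bbbk)$ be the $\Bbbk$-algebra homomorphism with $e_r\mapsto x_1^r$. For every $k\in\mathbb{N}$, $$\mathrm{im}(\Psi_\Bbbk)\cap W^{(2)}_k(\Bbbk)\subset J_k:=\{f\in\Bbbk[x_1,\dots,x_k]^{\Sigma_k}:\ f=0 \text{ whenever } x_1=x_2+1=\dots=x_p+p-1\}$$ (for $k<p$ the condition is vacuous and $J_k=\Bbbk[x_1,\dots,x_k]^{\Sigma_k}$).
   Context: $\mathbb{N}=\{0,1,\dots\}$; $\frac12$ denotes the inverse of $2$ in $\Bbbk$. $Y_2^>(\Bbbk)$ is the $\Bbbk$-algebra generated by $e_r$ ($r\in\mathbb{N}$) with relations $[e_{r+1},e_s]-[e_r,e_{s+1}]=e_re_s+e_se_r$. $W^{(2)}(\Bbbk)=\bigoplus_{k\in\mathbb{N}}W^{(2)}_k(\Bbbk)$ with $W^{(2)}_k(\Bbbk)=\Bbbk[x_1,\dots,x_k]^{\Sigma_k}$, and product: for $F\in W_k$, $G\in W_\ell$, $F\star G=\sum_{\sigma}\sigma\big(F(x_1,\dots,x_k)G(x_{k+1},\dots,x_{k+\ell})\prod_{r\le k<r'}\frac{x_r-x_{r'}+1}{x_r-x_{r'}}\big)$, summing over $\sigma\in\Sigma_{k+\ell}$ with $\sigma(1)<\dots<\sigma(k)$ and $\sigma(k+1)<\dots<\sigma(k+\ell)$, acting by $x_r\mapsto x_{\sigma(r)}$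 (the result is a symmetric polynomial). *)

From HB Require Import structures.
From mathcomp Require Import all_boot all_order all_algebra all_fingroup.
From mathcomp Require Import mpoly.
Set Implicit Arguments. Unset Strict Implicit. Unset Printing Implicit Defensive.
Import Order.TTheory GRing.Theory Num.Theory.
Local Open Scope ring_scope.

Section Shuffle.
Variable K : fieldType.

Definition perm_act (n : nat) (s : 'S_n) (P : {mpoly K[n]}) : {mpoly K[n]} :=
  P \mPo [tuple 'X_(s i) | i < n].

Definition lift_left (k l : nat) (F : {mpoly K[k]}) : {mpoly K[k + l]} :=
  F \mPo [tuple 'X_(lshift l i) | i < k].
Definition lift_right (k l : nat) (G : {mpoly K[l]}) : {mpoly K[k + l]} :=
  G \mPo [tuple 'X_(rshift k j) | j < l].

Definition is_shuffle (k l : nat) (s : 'S_(k + l)) : bool :=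
  [forall i : 'I_k, forall j : 'I_k,
     (i < j)%N ==> (s (lshift l i) < s (lshift l j))%N] &&
  [forall i : 'I_l, forall j : 'I_l,
     (i < j)%N ==> (s (rshift k i) < s (rshift k j))%N].

Definition shuffle_num (k l : nat) (F : {mpoly K[k]}) (G : {mpoly K[l]})
  : {mpoly K[k + l]} :=
  lift_left l F * lift_right k G *
  \prod_(i < k) \prod_(j < l) ('X_(lshift l i) - 'X_(rshift k j) + 1).

Definition shuffle_den (k l : nat) : {mpoly K[k + l]} :=
  \prod_(i < k) \prod_(j < l) ('X_(lshift l i) - 'X_(rshift k j)).

Definition shuffle_frac (k l : nat) (F : {mpoly K[k]}) (G : {mpoly K[l]})
  : {fraction {mpoly K[k + l]}} :=
  \sum_(s : 'S_(k + l) | is_shuffle s)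
     tofrac (perm_act s (shuffle_num F G)) / tofrac (perm_act s (shuffle_den k l)).

(* H is the shuffle product F * G in W^(2) (H the polynomial equal to it) *)
Definition is_star (k l : nat) (F : {mpoly K[k]}) (G : {mpoly K[l]})
  (H : {mpoly K[k + l]}) : Prop :=
  tofrac H = shuffle_frac F G.

(* ImPsi k f  <->  f lies in im(Psi) ∩ W_k, where im(Psi) is the subalgebra
   of W^(2) generated by the images x_1^r of the generators e_r of Y_2^>;
   ImPsi k is the degree-k homogeneous component of that graded subalgebra. *)
Local Unset Implicit Arguments.
Inductive ImPsi : forall k : nat, {mpoly K[k]} -> Prop :=
  | ImPsi_one : ImPsi 0 (1 : {mpoly K[0]})
  | ImPsi_gen (r : nat) : ImPsi 1 ('X_(@ord0 0) ^+ r)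
  | ImPsi_zero (k : nat) : ImPsi k 0
  | ImPsi_add (k : nat) (f g : {mpoly K[k]}) :
      ImPsi k f -> ImPsi k g -> ImPsi k (f + g)
  | ImPsi_scale (k : nat) (c : K) (f : {mpoly K[k]}) :
      ImPsi k f -> ImPsi k (c *: f)
  | ImPsi_mul (k l : nat) (F : {mpoly K[k]}) (G : {mpoly K[l]})
      (H : {mpoly K[k + l]}) :
      ImPsi k F -> ImPsi l G -> is_star F G H -> ImPsi (k + l) H.

Local Set Implicit Arguments.

Definition J (p k : nat) (f : {mpoly K[k]}) : Prop :=
  f \is symmetric /\
  ((p <= k)%N -> forall (a : 'I_k -> K) (x0 : K),
      (forall i : 'I_k, (i < p)%N -> a i = x0 - i%:R) -> f.@[a] = 0).
End Shuffle.

From HB Require Import structures.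
From mathcomp Require Import all_boot all_order all_algebra all_fingroup.
From mathcomp Require Import mpoly zify ring.
Set Implicit Arguments. Unset Strict Implicit. Unset Printing Implicit Defensive.
Import Order.TTheory GRing.Theory Num.Theory.
Local Open Scope ring_scope.

(* Im(Psi) is spanned by iterated shuffle products of the x_1^r, so it suffices
   that the symmetric polynomials satisfying the wheel condition (vanishing once
   some p of the variables, in any positions, are specialised to x0, x0 - 1, ...,
   x0 - (p - 1)) contain 1 and x_1^r and are closed under the shuffle product.
   Specialising the identity H * prod den = sum num * prod den' keeps every
   denominator nonzero, since the specialised values are distinct modulo p and
   differ from the remaining variables.  In each shuffle term the wheel variables
   either all lie in the F-block, or all in the G-block, or else, going around
   Z/p, some x0 - j lies in the F-block and x0 - (j - 1) in the G-block, which
   kills a factor x_r - x_r' + 1; the wrap-around at j = 0 is where p = 0 in K is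
   used.  Symmetry is preserved because right multiplication by a permutation
   permutes the shuffles modulo S_k x S_l, and S_k x S_l fixes each term. *)

Section MPolySubst.
Variable R : comNzRingType.

Lemma comp_mpolyA n k m (P : {mpoly R[n]}) (t : n.-tuple {mpoly R[k]})
    (u : k.-tuple {mpoly R[m]}) :
  (P \mPo t) \mPo u = P \mPo [tuple tnth t i \mPo u | i < n].
Proof.
rewrite [P \mPo t]comp_mpolyEX [RHS]comp_mpolyEX raddf_sum /=.
apply: eq_bigr => mm _; rewrite comp_mpolyZ !comp_mpolyX rmorph_prod.
by congr (_ *: _); apply: eq_bigr => i _; rewrite rmorphXn tnth_mktuple.
Qed.

Lemma comp_mpolyXU_tuple n k (i : 'I_n) (f : 'I_n -> {mpoly R[k]}) :
  'X_i \mPo [tuple f j | j < n] = f i.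
Proof. by rewrite comp_mpolyXU -tnth_nth tnth_mktuple. Qed.

Lemma msym_mPoX n (s : 'S_n) (P : {mpoly R[n]}) :
  msym s P = P \mPo [tuple 'X_(s i) | i < n].
Proof.
rewrite -[LHS]comp_mpoly_id msym_mPo; congr (_ \mPo _).
by apply: eq_from_tnth => i; rewrite !tnth_mktuple.
Qed.

Lemma msymXU n (s : 'S_n) (i : 'I_n) : msym s ('X_i : {mpoly R[n]}) = 'X_(s i).
Proof. by rewrite msym_mPoX comp_mpolyXU_tuple. Qed.

Lemma mpolyXU_inj n : injective (fun i : 'I_n => 'X_i : {mpoly R[n]}).
Proof.
move=> a b /(congr1 (mcoeff U_(a))); rewrite !mcoeffXU eqxx.
by case: eqP => // _ /eqP; rewrite oner_eq0.
Qed.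

Lemma mpolyC_neqX n (c : R) (i : 'I_n) : c%:MP != 'X_i.
Proof.
apply/eqP => /(congr1 (mcoeff U_(i))).
by rewrite mcoeffC mcoeffXU mnm1_eq0 eqxx mulr0 => /eqP; rewrite eq_sym oner_eq0.
Qed.

End MPolySubst.

Lemma tofrac_sum_divP (T : idomainType) (I : finType) (P : pred I) (a : T)
    (num den : I -> T) :
    (forall i, P i -> den i != 0) ->
  (tofrac a = \sum_(i | P i) tofrac (num i) / tofrac (den i)) <->
  (a * \prod_(i | P i) den i =
     \sum_(i | P i) num i * \prod_(j | P j && (j != i)) den j).
Proof.
move=> den0.
have D0 : tofrac (\prod_(i | P i) den i) != 0 :> {fraction T}.
  by rewrite tofrac_eq0 prodf_seq_neq0; apply/allP => i _; apply/implyP/den0.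
have E : (\sum_(i | P i) tofrac (num i) / tofrac (den i)) *
           tofrac (\prod_(i | P i) den i)
       = tofrac (\sum_(i | P i) num i * \prod_(j | P j && (j != i)) den j).
  rewrite mulr_suml rmorph_sum; apply: eq_bigr => i Pi.
  by rewrite (bigD1 i Pi) /= !rmorphM mulrA divfK // tofrac_eq0 den0.
split => [H|H]; apply/eqP.
  by rewrite -tofrac_eq tofracM H E.
by rewrite -(inj_eq (mulIf D0)) /= E -tofracM H.
Qed.

Lemma tofrac_sum_div_rmorph (T S : idomainType) (I : finType) (P : pred I)
    (f : {rmorphism T -> S}) (a : T) (num den : I -> T) :
    (forall i, P i -> f (den i) != 0) ->
  tofrac a = \sum_(i | P i) tofrac (num i) / tofrac (den i) ->
  tofrac (f a) = \sum_(i | P i) tofrac (f (num i)) / tofrac (f (den i)).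
Proof.
move=> fden0; have den0 i : P i -> den i != 0.
  by move=> Pi; apply: contraNneq (fden0 i Pi) => ->; rewrite rmorph0.
move/(tofrac_sum_divP _ _ den0) => E; apply/(tofrac_sum_divP _ _ fden0).
rewrite -rmorph_prod -rmorphM E rmorph_sum; apply: eq_bigr => i _.
by rewrite rmorphM rmorph_prod.
Qed.

Lemma perm_act_mPo (K : fieldType) n m (s : 'S_n) (P : {mpoly K[n]})
    (c : n.-tuple {mpoly K[m]}) :
  perm_act s P \mPo c = P \mPo [tuple tnth c (s i) | i < n].
Proof. by rewrite /perm_act -msym_mPoX msym_mPo. Qed.

Section ShuffleTerms.
Variables (K : fieldType) (k l : nat).
Local Notation n := (k + l).

Lemma shuffle_num_mPo m (F : {mpoly K[k]}) (G : {mpoly K[l]})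
    (f : 'I_n -> {mpoly K[m]}) :
  shuffle_num F G \mPo [tuple f x | x < n] =
    (F \mPo [tuple f (lshift l i) | i < k]) *
    (G \mPo [tuple f (rshift k j) | j < l]) *
    \prod_(i < k) \prod_(j < l) (f (lshift l i) - f (rshift k j) + 1).
Proof.
rewrite /shuffle_num !rmorphM rmorph_prod /=; congr (_ * _ * _).
- rewrite /lift_left comp_mpolyA; congr (_ \mPo _); apply: eq_from_tnth => i.
  by rewrite !tnth_mktuple comp_mpolyXU_tuple.
- rewrite /lift_right comp_mpolyA; congr (_ \mPo _); apply: eq_from_tnth => j.
  by rewrite !tnth_mktuple comp_mpolyXU_tuple.
- apply: eq_bigr => i _; rewrite rmorph_prod; apply: eq_bigr => j _.
  by rewrite rmorphD rmorphB rmorph1 /= !comp_mpolyXU_tuple.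
Qed.

Lemma shuffle_den_mPo m (f : 'I_n -> {mpoly K[m]}) :
  shuffle_den K k l \mPo [tuple f x | x < n] =
    \prod_(i < k) \prod_(j < l) (f (lshift l i) - f (rshift k j)).
Proof.
rewrite /shuffle_den rmorph_prod; apply: eq_bigr => i _.
rewrite rmorph_prod; apply: eq_bigr => j _.
by rewrite rmorphB /= !comp_mpolyXU_tuple.
Qed.

Lemma shuffle_den_mPo_neq0 m (f : 'I_n -> {mpoly K[m]}) :
  injective f -> shuffle_den K k l \mPo [tuple f x | x < n] != 0.
Proof.
move=> f_inj; rewrite shuffle_den_mPo prodf_seq_neq0; apply/allP => i _ /=.
rewrite prodf_seq_neq0; apply/allP => j _ /=.
by rewrite subr_eq0 (inj_eq f_inj) eq_lrshift.
Qed.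

Lemma star_mPo m (F : {mpoly K[k]}) (G : {mpoly K[l]}) (H : {mpoly K[n]})
    (c : n.-tuple {mpoly K[m]}) :
    is_star F G H -> injective (tnth c) ->
  tofrac (H \mPo c) = \sum_(s | is_shuffle s)
    tofrac (shuffle_num F G \mPo [tuple tnth c (s i) | i < n]) /
    tofrac (shuffle_den K k l \mPo [tuple tnth c (s i) | i < n]).
Proof.
move=> FGH c_inj.
rewrite (tofrac_sum_div_rmorph (f := comp_mpoly c) _ FGH) => [|s _].
  by apply: eq_bigr => s _; rewrite /= !perm_act_mPo.
by rewrite /= perm_act_mPo shuffle_den_mPo_neq0 // => a b /c_inj /perm_inj.
Qed.

End ShuffleTerms.

Section SortedEnum.
Variable N : nat.

Lemma sorted_enum_ord_set (A : {set 'I_N}) : sorted ltn (map val (enum A)).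
Proof.
rewrite -[enum _](eq_filter (mem_enum _)) -(eq_filter (mem_map val_inj _)).
rewrite -filter_map (sorted_filter ltn_trans) //.
by rewrite unlock val_ord_enum iota_ltn_sorted.
Qed.

Lemma nth_enum_ord_set_ltn (A : {set 'I_N}) x y i j :
  (i < j < #|A|)%N -> (nth x (enum A) i < nth y (enum A) j)%N.
Proof.
case/andP=> ij jA; have iA : (i < #|A|)%N by apply: ltn_trans jA.
rewrite cardE in iA jA; rewrite -(nth_map x 0%N val iA) -(nth_map y 0%N val jA).
apply: (sorted_ltn_nth ltn_trans 0%N (sorted_enum_ord_set A));
  by rewrite ?inE ?size_map.
Qed.

Lemma nth_enum_imset_incr m (f : 'I_m -> 'I_N) :
    {homo f : i j / (i < j)%N} ->
  forall (i : 'I_m) x, nth x (enum [set f i | i : 'I_m]) i = f i.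
Proof.
move=> f_incr; have f_inj : injective f.
  move=> i j fij; apply/val_inj/eqP; rewrite eqn_leq.
  by apply/andP; split; rewrite leqNgt; apply/negP => /f_incr; rewrite fij ltnn.
have sorted_f : sorted ltn [seq val (f i) | i <- enum 'I_m].
  have := iota_ltn_sorted 0 m; rewrite -val_enum_ord !sorted_map.
  by apply: sub_sorted => i j /f_incr.
have E : map val (enum [set f i | i : 'I_m]) = [seq val (f i) | i <- enum 'I_m].
  apply: (irr_sorted_eq ltn_trans ltnn) => // [|y]; first exact: sorted_enum_ord_set.
  apply/mapP/mapP => [[x]|[i _ ->]].
  - by rewrite mem_enum => /imsetP [i _ ->] ->; exists i; rewrite ?mem_enum.
  - by exists (f i); rewrite // mem_enum imset_f.
move=> i x; apply: val_inj.
have i_lt : (i < size (enum [set f i | i : 'I_m]))%N.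
  by rewrite -cardE card_imset ?card_ord.
by rewrite -(nth_map x (val x) val i_lt) E (nth_map i) ?size_enum_ord // nth_ord_enum.
Qed.

End SortedEnum.

Section ShufflesAndSubsets.
Variables k l : nat.
Local Notation n := (k + l).

Definition left_image (s : 'S_n) : {set 'I_n} := [set s (lshift l i) | i : 'I_k].

Lemma left_imageM (s t : 'S_n) : left_image (s * t)%g = t @: left_image s.
Proof. by rewrite /left_image -imset_comp; apply: eq_imset => i /=; rewrite permM. Qed.

Lemma card_left_image (s : 'S_n) : #|left_image s| = k.
Proof. by rewrite card_imset ?card_ord // => i j /perm_inj /lshift_inj. Qed.

Lemma mem_left_image (s : 'S_n) (z : 'I_n) : (s z \in left_image s) = (z < k)%N.
Proof.
case: split_ordP => [i|j] ->; first exact: imset_f.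
by apply/imsetP => -[i _ /perm_inj /eqP]; rewrite eq_sym eq_lrshift.
Qed.

Lemma left_imageC (s : 'S_n) : ~: left_image s = [set s (rshift k j) | j : 'I_l].
Proof.
apply/setP => y; rewrite inE -(permKV s y) mem_left_image.
case: split_ordP => [i|j] ->; last exact/esym/imset_f.
by apply/esym/imsetP => -[j _ /perm_inj /eqP]; rewrite eq_lrshift.
Qed.

Definition set_shuffle_fun (S : {set 'I_n}) (x : 'I_n) : 'I_n :=
  match split x with
  | inl i => nth x (enum S) i
  | inr j => nth x (enum (~: S)) j
  end.

Section SetShuffle.
Variables (S : {set 'I_n}) (cardS : #|S| = k).

Lemma size_enum_setC : size (enum (~: S)) = l.
Proof. by apply/eqP; rewrite -cardE -(eqn_add2l k) -{1}cardS cardsC card_ord. Qed.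

Lemma mem_set_shuffle_fun x : (set_shuffle_fun S x \in S) = (x < k)%N.
Proof.
rewrite /set_shuffle_fun; case: split_ordP => [i|j] _.
  by rewrite -mem_enum mem_nth // -cardE cardS.
have : nth x (enum (~: S)) j \in ~: S by rewrite -mem_enum mem_nth ?size_enum_setC.
by rewrite inE => /negbTE.
Qed.

Lemma set_shuffle_fun_inj : injective (set_shuffle_fun S).
Proof.
move=> x y Exy; have xy_k : (x < k)%N = (y < k)%N.
  by rewrite -!mem_set_shuffle_fun Exy.
have size_S : size (enum S) = k by rewrite -cardE.
move: Exy xy_k; rewrite /set_shuffle_fun.
case: split_ordP => [i|j] ->; case: split_ordP => [i'|j'] -> E //= _.
- rewrite (set_nth_default (lshift l i) (lshift l i')) ?size_S // in E.
  suff /ord_inj -> : nat_of_ord i = i' by [].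
  by apply/eqP; rewrite -(@nth_uniq _ (lshift l i) (enum S)) ?E ?size_S ?enum_uniq.
- rewrite (set_nth_default (rshift k j) (rshift k j')) ?size_enum_setC // in E.
  suff /ord_inj -> : nat_of_ord j = j' by [].
  apply/eqP; rewrite -(@nth_uniq _ (rshift k j) (enum (~: S))) ?E ?enum_uniq //;
    by rewrite size_enum_setC.
Qed.

End SetShuffle.

(* The representative of s modulo S_k x S_l among the shuffles. *)
Definition shuffle_of (s : 'S_n) : 'S_n :=
  perm (set_shuffle_fun_inj (card_left_image s)).

Lemma shuffle_of_lshift (s : 'S_n) (i : 'I_k) :
  shuffle_of s (lshift l i) = nth (lshift l i) (enum (left_image s)) i.
Proof.
rewrite permE /set_shuffle_fun.
by case: split_ordP => [i'|j] /eqP; rewrite eq_shift // => /eqP ->.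
Qed.

Lemma shuffle_of_rshift (s : 'S_n) (j : 'I_l) :
  shuffle_of s (rshift k j) = nth (rshift k j) (enum (~: left_image s)) j.
Proof.
rewrite permE /set_shuffle_fun.
by case: split_ordP => [i|j'] /eqP; rewrite eq_shift // => /eqP ->.
Qed.

Lemma is_shuffle_shuffle_of (s : 'S_n) : is_shuffle (shuffle_of s).
Proof.
apply/andP; split; apply/forallP => i; apply/forallP => j; apply/implyP => ij.
  by rewrite !shuffle_of_lshift nth_enum_ord_set_ltn ?card_left_image ?ij /=.
rewrite !shuffle_of_rshift nth_enum_ord_set_ltn // ij /=.
by rewrite cardE size_enum_setC ?card_left_image.
Qed.

Lemma left_image_shuffle_of (s : 'S_n) : left_image (shuffle_of s) = left_image s.
Proof.
apply/eqP; rewrite eqEcard !card_left_image leqnn andbT.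
apply/subsetP => _ /imsetP [i _ ->]; rewrite shuffle_of_lshift -mem_enum mem_nth //.
by rewrite -cardE card_left_image.
Qed.

Lemma eq_shuffle_of (s s' : 'S_n) :
  left_image s = left_image s' -> shuffle_of s = shuffle_of s'.
Proof. by move=> E; apply/permP => x; rewrite !permE E. Qed.

Lemma shuffle_of_id (s : 'S_n) : is_shuffle s -> shuffle_of s = s.
Proof.
case/andP=> /forallP incr_left /forallP incr_right; apply/permP => x.
case: (split_ordP x) => [i|j] ->.
  rewrite shuffle_of_lshift nth_enum_imset_incr // => a b ab.
  exact: (implyP (forallP (incr_left a) b) ab).
rewrite shuffle_of_rshift left_imageC nth_enum_imset_incr // => a b ab.
exact: (implyP (forallP (incr_right a) b) ab).
Qed.

Lemma shuffle_of_mulKV (s t : 'S_n) :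
  is_shuffle s -> shuffle_of (shuffle_of (s * t) * t^-1)%g = s.
Proof.
move=> sh_s; rewrite -[RHS]shuffle_of_id //; apply: eq_shuffle_of.
rewrite left_imageM left_image_shuffle_of left_imageM -imset_comp.
by rewrite (eq_imset _ (permK t)) imset_id.
Qed.

Lemma shuffle_of_block (s : 'S_n) (x : 'I_n) :
  ((s * (shuffle_of s)^-1)%g x < k)%N = (x < k)%N.
Proof.
rewrite -(mem_left_image (shuffle_of s)) permM permKV left_image_shuffle_of.
exact: mem_left_image.
Qed.

Lemma sum_shuffle_of_mul (V : nmodType) (t : 'S_n) (g : 'S_n -> V) :
  \sum_(s | is_shuffle s) g (shuffle_of (s * t)%g) = \sum_(s | is_shuffle s) g s.
Proof.
rewrite [RHS](reindex_onto (fun s => shuffle_of (s * t)%g)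
                           (fun s => shuffle_of (s * t^-1)%g)) => [|s sh_s].
  apply: eq_bigl => s; rewrite is_shuffle_shuffle_of /=.
  have [sh_s|nsh_s] := boolP (is_shuffle s); first by rewrite shuffle_of_mulKV ?eqxx.
  by apply/esym/negbTE; apply: contra nsh_s => /eqP <-; exact: is_shuffle_shuffle_of.
by rewrite -{2}[t]invgK shuffle_of_mulKV.
Qed.

End ShufflesAndSubsets.

Section BlockPerm.
Variables (k l : nat) (b : 'S_(k + l)).
Hypothesis b_block : forall x, (b x < k)%N = (x < k)%N.

Let b_lshift_lt (i : 'I_k) : (b (lshift l i) < k)%N.
Proof. by rewrite b_block /= ltn_ord. Qed.

Let b_rshift_lt (j : 'I_l) : (b (rshift k j) - k < l)%N.
Proof.
by have := b_block (rshift k j); have := ltn_ord (b (rshift k j)); rewrite /=; lia.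
Qed.

Let bl (i : 'I_k) : 'I_k := Ordinal (b_lshift_lt i).
Let br (j : 'I_l) : 'I_l := Ordinal (b_rshift_lt j).

Let b_lshift i : b (lshift l i) = lshift l (bl i).
Proof. exact: val_inj. Qed.

Let b_rshift j : b (rshift k j) = rshift k (br j).
Proof. by apply: val_inj => /=; have := b_block (rshift k j); rewrite /=; lia. Qed.

Let bl_inj : injective bl.
Proof.
by move=> i i' /(congr1 (lshift l)); rewrite -!b_lshift => /perm_inj/lshift_inj.
Qed.

Let br_inj : injective br.
Proof.
by move=> j j' /(congr1 (@rshift k l)); rewrite -!b_rshift => /perm_inj/rshift_inj.
Qed.

Lemma prod_block_perm (R : comNzRingType) (Q : 'I_(k + l) -> 'I_(k + l) -> R) :
  \prod_(i < k) \prod_(j < l) Q (b (lshift l i)) (b (rshift k j)) =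
  \prod_(i < k) \prod_(j < l) Q (lshift l i) (rshift k j).
Proof.
rewrite [RHS](reindex_inj bl_inj); apply: eq_bigr => i _.
by rewrite [RHS](reindex_inj br_inj); apply: eq_bigr => j _; rewrite b_lshift b_rshift.
Qed.

Variables (K : fieldType) (m : nat) (f : 'I_(k + l) -> {mpoly K[m]}).

Lemma shuffle_num_block_perm (F : {mpoly K[k]}) (G : {mpoly K[l]}) :
    F \is symmetric -> G \is symmetric ->
  shuffle_num F G \mPo [tuple f (b x) | x < k + l] =
  shuffle_num F G \mPo [tuple f x | x < k + l].
Proof.
move=> /issymP symF /issymP symG; rewrite !shuffle_num_mPo.
have -> : F \mPo [tuple f (b (lshift l i)) | i < k] =
          F \mPo [tuple f (lshift l i) | i < k].
  rewrite -[F in RHS](symF (perm bl_inj)) msym_mPo; congr (_ \mPo _).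
  by apply: eq_from_tnth => i; rewrite !tnth_mktuple permE b_lshift.
have -> : G \mPo [tuple f (b (rshift k j)) | j < l] =
          G \mPo [tuple f (rshift k j) | j < l].
  rewrite -[G in RHS](symG (perm br_inj)) msym_mPo; congr (_ \mPo _).
  by apply: eq_from_tnth => j; rewrite !tnth_mktuple permE b_rshift.
by rewrite (prod_block_perm (fun x y => f x - f y + 1)).
Qed.

Lemma shuffle_den_block_perm :
  shuffle_den K k l \mPo [tuple f (b x) | x < k + l] =
  shuffle_den K k l \mPo [tuple f x | x < k + l].
Proof.
rewrite (shuffle_den_mPo (fun x => f (b x))) (shuffle_den_mPo f).
exact: (prod_block_perm (fun x y => f x - f y)).
Qed.

End BlockPerm.

Lemma star_symmetric (K : fieldType) k l (F : {mpoly K[k]}) (G : {mpoly K[l]})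
    (H : {mpoly K[k + l]}) :
  F \is symmetric -> G \is symmetric -> is_star F G H -> H \is symmetric.
Proof.
move=> symF symG FGH; apply/issymP => t.
pose X (s : 'S_(k + l)) : (k + l).-tuple {mpoly K[k + l]} :=
  [tuple 'X_(s x) | x < k + l].
pose term s := tofrac (shuffle_num F G \mPo X s) / tofrac (shuffle_den K k l \mPo X s).
have term_shuffle_of s : term (shuffle_of s) = term s.
  have block := shuffle_of_block s; rewrite /term.
  pose Xs (y : 'I_(k + l)) : {mpoly K[k + l]} := 'X_(shuffle_of s y).
  have -> : X s = [tuple Xs ((s * (shuffle_of s)^-1)%g x) | x < k + l].
    by apply: eq_from_tnth => x; rewrite !tnth_mktuple /Xs permM permKV.
  by rewrite (shuffle_num_block_perm block Xs) ?(shuffle_den_block_perm block Xs).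
have X_inj : injective (tnth (X t)).
  by move=> x y; rewrite !tnth_mktuple => /mpolyXU_inj /perm_inj.
have XM (s : 'S_(k + l)) : [tuple tnth (X t) (s x) | x < k + l] = X (s * t)%g.
  by apply: eq_from_tnth => x; rewrite !tnth_mktuple permM.
apply/eqP; rewrite -tofrac_eq msym_mPoX (star_mPo FGH X_inj) FGH; apply/eqP.
rewrite -[RHS]/(\sum_(s | is_shuffle s) term s) -(sum_shuffle_of_mul t term).
by apply: eq_bigr => s _; rewrite term_shuffle_of /term -XM.
Qed.

Lemma ord_predE p (a : 'I_p) :
  ord_pred a = (if a == 0 :> nat then p.-1 else a.-1) :> nat.
Proof.
case: a => [[|a] lt_ap] /=; last by rewrite modnDr modn_small // ltnW.
by rewrite add0n modn_small // ltn_predL.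
Qed.

Lemma ord_pred_boundary p (P : pred 'I_p) :
  (exists i, P i) -> (exists j, ~~ P j) -> exists i, P i && ~~ P (ord_pred i).
Proof.
move=> [i Pi] [j nPj]; apply/existsP; apply: contraNT nPj.
rewrite negb_exists => /forallP /= closed.
have P_pred a : P a -> P (ord_pred a).
  by move: (closed a); rewrite negb_and negbK => /orP [/negP|].
have P_down d (a b : 'I_p) : P a -> a = (b + d)%N :> nat -> P b.
  elim: d a => [|d IH] a Pa abd; first by rewrite (_ : b = a) //; apply: ord_inj; lia.
  by apply: (IH _ (P_pred a Pa)); rewrite ord_predE; case: eqP; lia.
have p_gt0 : (0 < p)%N by apply: leq_ltn_trans (ltn_ord i).
have P0 : P (Ordinal p_gt0) by apply: (P_down i i); rewrite ?add0n.
apply: (P_down (p.-1 - j)%N _ _ (P_pred _ P0)); rewrite ord_predE /=.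
by have := ltn_ord j; lia.
Qed.

Section Wheel.
Variables (K : fieldType) (p : nat).
Hypothesis pcharKp : p \in [pchar K].

Lemma natr_ord_inj : injective (fun j : 'I_p => j%:R : K).
Proof.
suff le_inj (a b : 'I_p) : (a <= b)%N -> a%:R = b%:R :> K -> a = b.
  by move=> a b E; case: (leqP a b) => [ab|/ltnW ba]; [|apply/esym]; apply: le_inj.
move=> ab /esym/eqP; rewrite -subr_eq0 -natrB // -(dvdn_pcharf pcharKp).
case: (posnP (b - a)) => [ba0 _|ba /(dvdn_leq ba)]; first by apply: ord_inj; lia.
by have := ltn_ord b; lia.
Qed.

Lemma natr_ord_pred (j : 'I_p) : (ord_pred j)%:R = j%:R - 1 :> K.
Proof.
have p_gt0 : (0 < p)%N by apply: leq_ltn_trans (ltn_ord j).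
apply: (addIr 1); rewrite subrK natr1 ord_predE.
case: eqP => [-> | /eqP j_neq0]; first by rewrite prednK // (pcharf0 pcharKp).
by rewrite prednK // lt0n.
Qed.

(* [g i = Some j] specialises x_i to x0 - j.  Letting the wheel sit at arbitrary
   positions makes the condition stable under the shuffle product; for symmetric
   polynomials it is the condition defining J. *)
Definition wheel_labelling n (g : 'I_n -> option 'I_p) : Prop :=
  (forall j, exists i, g i = Some j) /\
  (forall a b j, g a = Some j -> g b = Some j -> a = b).

Definition wheel_subst n (x0 : K) (g : 'I_n -> option 'I_p) :
    n.-tuple {mpoly K[n]} :=
  [tuple if g i is Some j then (x0 - j%:R)%:MP else 'X_i | i < n].

Definition wheel_vanishing n (f : {mpoly K[n]}) : Prop :=
  forall x0 (g : 'I_n -> option 'I_p),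
    wheel_labelling g -> f \mPo wheel_subst x0 g = 0.

Lemma wheel_subst_inj n x0 (g : 'I_n -> option 'I_p) :
  wheel_labelling g -> injective (tnth (wheel_subst x0 g)).
Proof.
move=> [_ g_inj] a b; rewrite !tnth_mktuple.
case Ea: (g a) => [ja|]; case Eb: (g b) => [jb|] => /eqP.
- rewrite mpolyC_eq (inj_eq (addrI x0)) eqr_opp => /eqP/natr_ord_inj ja_jb.
  by apply: (g_inj a b ja); rewrite // ja_jb.
- by rewrite (negbTE (mpolyC_neqX _ _)).
- by rewrite eq_sym (negbTE (mpolyC_neqX _ _)).
- by move/eqP/mpolyXU_inj.
Qed.

Lemma wheel_subst_pred0 n x0 (g : 'I_n -> option 'I_p) u v (j : 'I_p) :
    g u = Some j -> g v = Some (ord_pred j) ->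
  tnth (wheel_subst x0 g) u - tnth (wheel_subst x0 g) v + 1 = 0.
Proof.
move=> gu gv; rewrite !tnth_mktuple gu gv -mpolyCB -mpolyC1 -mpolyCD natr_ord_pred.
suff -> : x0 - j%:R - (x0 - (j%:R - 1)) + 1 = 0 by rewrite mpolyC0.
by ring.
Qed.

Lemma wheel_vanishing_sub m n (F : {mpoly K[m]}) (f : 'I_m -> 'I_n) x0
    (g : 'I_n -> option 'I_p) :
    wheel_vanishing F -> injective f -> wheel_labelling g ->
    (forall j, exists i, g (f i) = Some j) ->
  F \mPo [tuple tnth (wheel_subst x0 g) (f i) | i < m] = 0.
Proof.
move=> VF f_inj [_ g_inj] gf_surj.
have -> : [tuple tnth (wheel_subst x0 g) (f i) | i < m] =
    [tuple tnth (wheel_subst x0 (g \o f)) i \mPo [tuple 'X_(f i) | i < m] | i < m].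
  apply: eq_from_tnth => i; rewrite !tnth_mktuple /=.
  by case: (g (f i)) => [j|]; rewrite ?comp_mpolyC ?comp_mpolyXU_tuple.
rewrite -comp_mpolyA VF ?comp_mpoly0 //; split=> // a b j ga gb.
exact/f_inj/(g_inj _ _ j).
Qed.

Lemma wheel_vanishing_J k (f : {mpoly K[k]}) :
  f \is symmetric -> wheel_vanishing f -> J p f.
Proof.
move=> symf Vf; split=> // p_le_k a x0 a_wheel.
pose g (i : 'I_k) : option 'I_p := insub (val i).
have g_wheel : wheel_labelling g.
  split=> [j|i i' j]; first by exists (widen_ord p_le_k j); rewrite /g /= valK.
  rewrite /g; case: insubP => // u _ iu [<-]; case: insubP => // v _ i'v [] vu.
  by apply: val_inj; rewrite -iu -i'v vu.
move: (Vf x0 g g_wheel) => /(congr1 (meval a)).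
rewrite comp_mpoly_meval meval0 => <-.
apply: meval_eq => i; rewrite tnth_mktuple /g.
case: insubP => [u ui iu|_]; last by rewrite mevalXU.
by rewrite mevalC a_wheel // iu.
Qed.

Section StarWheel.
Variables (k l : nat) (F : {mpoly K[k]}) (G : {mpoly K[l]}).
Hypotheses (VF : wheel_vanishing F) (VG : wheel_vanishing G).

Lemma shuffle_num_wheel_subst x0 (g : 'I_(k + l) -> option 'I_p)
    (s : 'S_(k + l)) :
    wheel_labelling g ->
  shuffle_num F G \mPo [tuple tnth (wheel_subst x0 g) (s x) | x < k + l] = 0.
Proof.
move=> g_wheel; rewrite shuffle_num_mPo.
pose A := [pred j | [exists i, g (s (lshift l i)) == Some j]].
have right_of_A j : ~~ A j -> exists i, g (s (rshift k i)) = Some j.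
  move=> nAj; have [u gu] := g_wheel.1 j; move: gu; rewrite -(permKV s u).
  case: (split_ordP (s^-1 u)%g) => [i|i] -> gu; last by exists i.
  by case/negP: nAj; apply/existsP; exists i; rewrite gu.
have [/forallP allA|] := boolP [forall j, A j].
  rewrite (wheel_vanishing_sub (f := fun i => s (lshift l i)) x0 VF) ?mul0r //.
    by move=> a b /perm_inj /lshift_inj.
  by move=> j; have /existsP [i /eqP] := allA j; exists i.
rewrite negb_forall => /existsP [j1 nA1].
have [/forallP noA|] := boolP [forall j, ~~ A j].
  rewrite (wheel_vanishing_sub (f := fun j => s (rshift k j)) x0 VG) ?mulr0 ?mul0r //.
    by move=> a b /perm_inj /rshift_inj.
  by move=> j; apply/right_of_A/noA.
rewrite negb_forall => /existsP [j2]; rewrite negbK => A2.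
have [j /andP [/existsP [i /eqP gi] /right_of_A [i' gi']]] :=
  ord_pred_boundary (ex_intro _ j2 A2) (ex_intro _ j1 nA1).
rewrite (bigD1 i) //= (bigD1 i') //= (wheel_subst_pred0 x0 gi gi').
by rewrite !mul0r mulr0.
Qed.

Lemma star_wheel_vanishing (H : {mpoly K[k + l]}) :
  is_star F G H -> wheel_vanishing H.
Proof.
move=> FGH x0 g g_wheel; apply/eqP.
rewrite -tofrac_eq0 (star_mPo FGH (wheel_subst_inj (x0 := x0) g_wheel)).
rewrite big1 // => s _.
by rewrite shuffle_num_wheel_subst // rmorph0 mul0r.
Qed.

End StarWheel.

Lemma ImPsi_symmetric_wheel_vanishing (p_gt1 : (1 < p)%N) k (f : {mpoly K[k]}) :
  ImPsi K k f -> f \is symmetric /\ wheel_vanishing f.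
Proof.
have p_gt0 : (0 < p)%N by apply: ltnW.
elim=> {k f} [|r|k|k f g _ [symf Vf] _ [symg Vg]|k c f _ [symf Vf]|
              k l F G H _ [symF VF] _ [symG VG] FGH].
- split=> [|x0 g [g_surj _]]; first exact: rpred1.
  by have [[]] := g_surj (Ordinal p_gt0).
- split=> [|x0 g [g_surj _]].
    by apply/issymP => s; rewrite rmorphXn /= msymXU [s _]ord1.
  have [i0 g0] := g_surj (Ordinal p_gt0); have [i1 g1] := g_surj (Ordinal p_gt1).
  by move: g1; rewrite (ord1 i1) -(ord1 i0) g0 => /(congr1 (omap val)).
- by split=> [|x0 g _]; [exact: rpred0 | rewrite comp_mpoly0].
- by split=> [|x0 h hh]; [exact: rpredD | rewrite comp_mpolyD Vf // Vg // addr0].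
- by split=> [|x0 h hh]; [exact: rpredZ | rewrite comp_mpolyZ Vf // scaler0].
- split; [exact: star_symmetric FGH | exact: star_wheel_vanishing FGH].
Qed.

End Wheel.

Unset Implicit Arguments. Set Strict Implicit.

Theorem proposition3p1 (K : closedFieldType) (p : nat)
  (hp : p \in [pchar K]) (hp2 : (2 < p)%N)
  (k : nat) (f : {mpoly K[k]}) :
  ImPsi K k f -> J p f.
Proof.
move=> imf; have [symf Vf] := ImPsi_symmetric_wheel_vanishing hp (ltnW hp2) imf.
exact: wheel_vanishing_J.
Qed.
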